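(* For every $k\in\mathbb{N}$ and every $i,j\in\{0,1,\dots,2^k-1\}$, $\mathrm{lcis}(\alpha_k^0\cdots\alpha_k^i,\ \beta_k^0\cdots\beta_k^j)=i+j+2^k$.
   Context: $\mathrm{lcis}(X,Y)$ denotes the length of the longest strictly increasing common subsequence of integer sequences $X,Y$. For $A=\langle a_0,\dots,a_{n-1}\rangle$, $\mathrm{inflate}(A)=\langle 2a_0-1,2a_0,\dots,2a_{n-1}-1,2a_{n-1}\rangle$; $\circ$ and juxtaposition denote concatenation. Separator sequences: for each $k\in\mathbb{N}$, $A_k=\alpha_k^0\cdots\alpha_k^{2^k-1}$ and $B_k=\beta_k^0\cdots\beta_k^{2^k-1}$ are concatenations of $2^k$ blocks, defined inductively. $A_0=B_0=\langle 1\rangle$ (a single block). Let $s_k$ be the largest element of $A_k$ and $B_k$ (one has $s_k=2^{k+2}-3$). For $i\in\{0,\dots,2^k-1\}$: $\alpha_{k+1}^{2i}=\mathrm{inflate}(\alpha_k^i)\circ\langle 2s_k+2\rangle$, $\alpha_{k+1}^{2i+1}=\langle 2s_k+1,2s_k+3\rangle$, $\beta_{k+1}^{2i}=\mathrm{inflate}(\beta_k^i)\circ\langle 2s_k+1\rangle$, $\beta_{k+1}^{2i+1}=\langle 2s_k+2,2s_k+3\rangle$. *)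

From mathcomp Require Import all_boot.
Set Implicit Arguments. Unset Strict Implicit. Unset Printing Implicit Defensive.

(* All sequences here consist of positive integers; we use nat. *)

Fixpoint subseqs (s : seq nat) : seq (seq nat) :=
  match s with
  | [::] => [:: [::]]
  | x :: s' => let r := subseqs s' in map (cons x) r ++ r
  end.

Definition lcis (X Y : seq nat) : nat :=
  \max_(s <- subseqs X | subseq s Y && sorted ltn s) size s.

Definition inflate (A : seq nat) : seq nat :=
  flatten [seq [:: (2 * a).-1; 2 * a] | a <- A].

(* seps k = (blocks of A_k, blocks of B_k), each a list of 2^k blocks. *)
Fixpoint seps (k : nat) : seq (seq nat) * seq (seq nat) :=
  match k with
  | 0 => ([:: [:: 1]], [:: [:: 1]])
  | k'.+1 =>
      let (As, Bs) := seps k' in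
      let s := foldr maxn 0 (flatten As ++ flatten Bs) in
      (flatten [seq [:: inflate a ++ [:: 2 * s + 2]; [:: 2 * s + 1; 2 * s + 3]] | a <- As],
       flatten [seq [:: inflate b ++ [:: 2 * s + 1]; [:: 2 * s + 2; 2 * s + 3]] | b <- Bs])
  end.

Definition alpha (k i : nat) : seq nat := nth [::] (seps k).1 i.
Definition beta (k j : nat) : seq nat := nth [::] (seps k).2 j.

Definition alpha_prefix (k i : nat) : seq nat := flatten [seq alpha k t | t <- iota 0 i.+1].
Definition beta_prefix (k j : nat) : seq nat := flatten [seq beta k t | t <- iota 0 j.+1].

From mathcomp Require Import all_boot.
From mathcomp Require Import zify.
Set Implicit Arguments. Unset Strict Implicit. Unset Printing Implicit Defensive.

(* Induction on k, with s = s_k.  Every entry of a level-k block is at most s,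
   so after inflation it lies below 2s+1, while the new separators 2s+1, 2s+2,
   2s+3 lie above.  The prefix of A_{k+1} ending with block e + 2i is the
   inflated level-k prefix up to block i, interleaved with copies of
   <2s+2, 2s+1, 2s+3> and ending in <2s+2> or <2s+2, 2s+1, 2s+3>; for B the
   separators are <2s+1, 2s+2, 2s+3> and the ends <2s+1> or <2s+1, 2s+2, 2s+3>.
   An increasing common subsequence splits into a low part and a high part.
   The low part lies in the inflations of two level-k prefixes up to blocks
   t <= i and u <= j, and inflation exactly doubles lcis (split by parity and
   halve), so it has length at most 2(t + u + 2^k).  The high part lies in the
   separators after those blocks; it is increasing over three values and the
   two separator orders disagree, so it has length at most
   2(i - t) + 2(j - u) + e + d.  Conversely an optimal level-k subsequence,
   inflated and followed by <>, <2s+1>, <2s+2> or <2s+1, 2s+3>, attains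
   e + 2i + d + 2j + 2^(k+1). *)

Lemma mem_subseqs s X : (s \in subseqs X) = subseq s X.
Proof.
elim: X s => [|x X IH] s /=; first by case: s.
rewrite mem_cat; case: s => [|y s]; first by rewrite IH sub0seq orbT.
rewrite /= IH; case: eqP => [->|ne].
  rewrite mem_map; last by move=> a b [].
  by rewrite IH; apply/idP/idP => [/orP[// | /cons_subseq] | ->].
by rewrite orbC; apply/idP/idP => [/orP[// | /mapP[t _ [/ne]]] | ->].
Qed.

Definition cis (V X Y : seq nat) := [&& subseq V X, subseq V Y & pairwise ltn V].

Lemma lcis_max V X Y : cis V X Y -> size V <= lcis X Y.
Proof.
case/and3P => VX VY V_lt; apply: (leq_bigmax_seq V); first by rewrite mem_subseqs.
by rewrite VY sorted_pairwise //; exact: ltn_trans.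
Qed.

Lemma lcis_le X Y n : (forall V, cis V X Y -> size V <= n) -> lcis X Y <= n.
Proof.
move=> le_n; apply/bigmax_leqP_seq => V; rewrite mem_subseqs => VX /andP[VY V_lt].
by apply: le_n; rewrite /cis VX VY -sorted_pairwise //; exact: ltn_trans.
Qed.

Lemma lcis_witness X Y : exists2 V, cis V X Y & size V = lcis X Y.
Proof.
rewrite /lcis big_seq_cond.
apply: (big_ind (fun m => exists2 V, cis V X Y & size V = m)).
- by exists [::] => //; rewrite /cis !sub0seq.
- by move=> m1 m2 [V1 ? ?] [V2 ? ?]; rewrite /maxn; case: ltnP; [exists V2 | exists V1].
move=> V; rewrite mem_subseqs => /andP[VX /andP[VY]].
rewrite sorted_pairwise => [V_lt|]; last exact: ltn_trans.
by exists V; rewrite // /cis VX VY.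
Qed.

Lemma lcis_subseq X X' Y Y' :
  subseq X X' -> subseq Y Y' -> lcis X Y <= lcis X' Y'.
Proof.
move=> XX' YY'; have [V /and3P[VX VY V_lt] <-] := lcis_witness X Y.
by apply: lcis_max; rewrite /cis V_lt (subseq_trans VX) ?(subseq_trans VY).
Qed.

Lemma lcis_cat X1 X2 Y1 Y2 :
  allrel ltn X1 X2 -> lcis X1 Y1 + lcis X2 Y2 <= lcis (X1 ++ X2) (Y1 ++ Y2).
Proof.
move=> X12; have [V1 /and3P[V1X V1Y V1_lt] <-] := lcis_witness X1 Y1.
have [V2 /and3P[V2X V2Y V2_lt] <-] := lcis_witness X2 Y2.
rewrite -size_cat; apply: lcis_max; rewrite /cis !cat_subseq // pairwise_cat V1_lt V2_lt !andbT.
by apply/allrelP => a b /(mem_subseq V1X) aX /(mem_subseq V2X); apply: (allrelP X12).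
Qed.

Lemma subseq_split (T : eqType) (W s1 s2 : seq T) : subseq W (s1 ++ s2) ->
  exists W1 W2, [/\ W = W1 ++ W2, subseq W1 s1 & subseq W2 s2].
Proof.
case/subseqP => m Hm ->.
exists (mask (take (size s1) m) s1), (mask (drop (size s1) m) s2).
rewrite -mask_cat; last by rewrite size_takel // Hm size_cat leq_addr.
rewrite cat_take_drop; split => //; apply/subseqP.
  by exists (take (size s1) m) => //; rewrite size_takel // Hm size_cat leq_addr.
by exists (drop (size s1) m) => //; rewrite size_drop Hm size_cat addKn.
Qed.

Lemma cat_eq_prefix_or_split (T : eqType) (W1 W2 Z1 Z2 : seq T) :
  W1 ++ W2 = Z1 ++ Z2 -> subseq Z1 W1 \/ exists2 C, Z1 = W1 ++ C & W2 = C ++ Z2.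
Proof.
move=> eW; case: (leqP (size Z1) (size W1)) => [Z1W1|W1Z1].
  left; have <- : take (size Z1) W1 = Z1 by rewrite -(takel_cat W2) // eW take_size_cat.
  exact: take_subseq.
right; exists (drop (size W1) Z1).
  by rewrite -{1}(cat_take_drop (size W1) Z1) -(takel_cat Z2) 1?ltnW // -eW take_size_cat.
by have := drop_cat (size W1) Z1 Z2; rewrite W1Z1 -eW drop_size_cat.
Qed.

Lemma inflate_cons a A : inflate (a :: A) = (2 * a).-1 :: 2 * a :: inflate A.
Proof. by []. Qed.

Lemma inflate_cat A1 A2 : inflate (A1 ++ A2) = inflate A1 ++ inflate A2.
Proof. by rewrite /inflate map_cat flatten_cat. Qed.

Lemma inflate_flatten As : inflate (flatten As) = flatten (map inflate As).
Proof. by elim: As => //= A As IH; rewrite inflate_cat IH. Qed.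

Lemma size_inflate A : size (inflate A) = 2 * size A.
Proof. by elim: A => // a A IH; rewrite inflate_cons /= IH mulnS. Qed.

Lemma all_inflate (q : pred nat) A :
  all q (inflate A) = all (fun a => q (2 * a).-1 && q (2 * a)) A.
Proof. by elim: A => // a A IH; rewrite inflate_cons /= IH andbA. Qed.

Lemma subseq_inflate W A : subseq W A -> subseq (inflate W) (inflate A).
Proof.
elim: A W => [|a A IH] [|w W] //=.
case: eqP => [-> /IH|_ /IH WA]; first by rewrite !inflate_cons /= !eqxx.
exact: subseq_trans WA (suffix_subseq [:: _; _] _).
Qed.

Lemma pairwise_inflate W :
  all (fun a => 0 < a) W -> pairwise ltn W -> pairwise ltn (inflate W).
Proof.
elim: W => // w W IH /andP[w_gt0 W_gt0] /andP[w_lt W_lt].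
have w2_lt : all (ltn (2 * w)) (inflate W).
  by rewrite all_inflate; apply: sub_all w_lt => a /=; lia.
rewrite inflate_cons /= w2_lt IH // !andbT; apply/andP; split; first lia.
by apply: sub_all w2_lt => a /=; lia.
Qed.

Lemma filter_parity_inflate (b : bool) A : all (fun a => 0 < a) A ->
  filter (fun v => odd v == b) (inflate A) = map (fun a => 2 * a - b) A.
Proof.
elim: A => // -[|a] A IH /andP[// _ /IH {}IH].
rewrite inflate_cons mulnS add2n /= oddM /= IH.
by case: (b) => /=; congr (_ :: _); lia.
Qed.

Lemma uphalf_double_sub a (b : bool) : 0 < a -> uphalf (2 * a - b) = a.
Proof. by rewrite uphalfE -divn2; lia. Qed.

Lemma uphalf_ltn_parity v w : odd v = odd w -> v < w -> uphalf v < uphalf w.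
Proof.
move=> vw; have := modn2 v; have := modn2 w; rewrite vw !uphalfE -!divn2; lia.
Qed.

Lemma cis_deflate_parity (b : bool) Z A B :
  all (fun a => 0 < a) A -> all (fun a => 0 < a) B -> cis Z (inflate A) (inflate B) ->
  cis (map uphalf (filter (fun v => odd v == b) Z)) A B.
Proof.
move=> A_gt0 B_gt0 /and3P[ZA ZB Z_lt].
have deflate C : all (fun a => 0 < a) C -> subseq Z (inflate C) ->
    subseq (map uphalf (filter (fun v => odd v == b) Z)) C.
  move=> C_gt0 ZC.
  have -> : C = map uphalf (filter (fun v => odd v == b) (inflate C)).
    rewrite filter_parity_inflate // -map_comp map_id_in // => a /(allP C_gt0).
    exact: uphalf_double_sub.
  apply: map_subseq; rewrite subseq_filter filter_all.
  exact: subseq_trans (filter_subseq _ _) ZC.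
rewrite /cis !deflate // pairwise_map.
apply: (sub_in_pairwise (P := fun v => odd v == b) (r := ltn)).
- by move=> v w /eqP vb /eqP wb; apply: uphalf_ltn_parity; rewrite vb wb.
- exact: filter_all.
- exact: pairwise_filter.
Qed.

Lemma lcis_inflate A B : all (fun a => 0 < a) A -> all (fun a => 0 < a) B ->
  lcis (inflate A) (inflate B) = 2 * lcis A B.
Proof.
move=> A_gt0 B_gt0; apply/eqP; rewrite eqn_leq; apply/andP; split.
  apply: lcis_le => Z Z_cis.
  have parity_part b : size (filter (fun v => odd v == b) Z) <= lcis A B.
    by rewrite -(size_map uphalf); apply/lcis_max/cis_deflate_parity.
  rewrite -(count_predC odd) -!size_filter mul2n -addnn.
  apply: leq_add; [have := parity_part true | have := parity_part false];
    by under eq_filter do rewrite ?eqb_id ?eqbF_neg.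
have [W /and3P[WA WB W_lt] <-] := lcis_witness A B.
have W_gt0 : all (fun a => 0 < a) W by apply/allP => a /(mem_subseq WA)/(allP A_gt0).
by rewrite -size_inflate; apply/lcis_max/and3P; split; rewrite ?subseq_inflate ?pairwise_inflate.
Qed.

Lemma pairwise_ltn_split c V :
  pairwise ltn V -> V = filter (predC (leq c)) V ++ filter (leq c) V.
Proof.
elim: V => //= v V IH /andP[v_lt /IH {1}->]; case: (leqP c v) => //= cv.
suff -> : filter (predC (leq c)) V = [::] by [].
rewrite (eq_in_filter (a2 := pred0)) ?filter_pred0 // => w /(allP v_lt) /=; lia.
Qed.

Section Weave.

Variables (T : eqType) (p : pred T).

Lemma filter_eq_nil s : all (predC p) s -> filter p s = [::].
Proof. by elim: s => //= x s IH /andP[/negbTE-> /IH]. Qed.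

Lemma filter_predC_eq_nil s : all p s -> filter (predC p) s = [::].
Proof. by elim: s => //= x s IH /andP[-> /IH]. Qed.

Lemma subseq_cat_predC Z U V :
  all (predC p) Z -> all (predC p) U -> all p V -> subseq Z (U ++ V) -> subseq Z U.
Proof.
move=> Zq Uq Vp ZUV; have <- : filter (predC p) (U ++ V) = U.
  by rewrite filter_cat (filter_predC_eq_nil Vp) cats0; apply/all_filterP.
by rewrite subseq_filter Zq.
Qed.

Definition weave (S : seq T) (hs : seq (seq T)) := flatten [seq h ++ S | h <- hs].

Lemma weave_cons S h hs : weave S (h :: hs) = h ++ S ++ weave S hs.
Proof. by rewrite /weave /= catA. Qed.

Lemma subseq_weave S hs : subseq (flatten hs) (weave S hs).
Proof.
elim: hs => //= h hs IH; rewrite weave_cons cat_subseq //.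
exact: subseq_trans IH (suffix_subseq _ _).
Qed.

Lemma filter_weave S E g gs :
  all (predC p) (flatten (rcons gs g)) -> all p S -> all p E ->
  filter p (weave S gs ++ g ++ E) = flatten (nseq (size gs) S) ++ E.
Proof.
move=> + Sp Ep; elim: gs => [|h gs IH] /=; rewrite ?all_cat.
  by move=> /andP[gq _]; rewrite filter_cat filter_eq_nil // (all_filterP Ep).
move=> /andP[hq /IH {}IH]; rewrite weave_cons -!catA !filter_cat filter_eq_nil //.
by rewrite (all_filterP Sp) -IH !filter_cat.
Qed.

Lemma subseq_weave_split S E g gs Zs Zb :
  all (predC p) (flatten (rcons gs g)) -> all p S -> all p E ->
  all (predC p) Zs -> all p Zb -> subseq (Zs ++ Zb) (weave S gs ++ g ++ E) ->
  exists2 t, t <= size gs &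
    subseq Zs (flatten (take t.+1 (rcons gs g))) &&
    subseq Zb (flatten (nseq (size gs - t) S) ++ E).
Proof.
move=> + Sp Ep + Zb_p; elim: gs Zs => [|h gs IH] Zs gs_q Zs_q ZX.
  exists 0 => //; rewrite -(filter_weave gs_q Sp Ep) subseq_filter Zb_p /= cats0.
  rewrite (subseq_trans (suffix_subseq _ _) ZX) andbT.
  apply: (subseq_cat_predC (V := E)) (subseq_trans (prefix_subseq _ _) ZX) => //.
  by rewrite -(cats0 g).
have ZbX : subseq Zb (flatten (nseq (size (h :: gs)) S) ++ E).
  rewrite -(filter_weave gs_q Sp Ep) subseq_filter Zb_p.
  exact: subseq_trans (suffix_subseq _ _) ZX.
move: gs_q ZX; rewrite /= all_cat => /andP[h_q gs_q].
have -> : weave S (h :: gs) ++ g ++ E = (h ++ S) ++ (weave S gs ++ g ++ E).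
  by rewrite weave_cons !catA.
case/subseq_split => W1 [W2 [eW W1hS W2X]].
case: (cat_eq_prefix_or_split (esym eW)) => [ZsW1 | [C eZs eW2]].
  exists 0; rewrite //= take0 cats0 ZbX andbT.
  exact: subseq_cat_predC Zs_q h_q Sp (subseq_trans ZsW1 W1hS).
have W1_q : all (predC p) W1 by move: Zs_q; rewrite eZs all_cat => /andP[].
have C_q : all (predC p) C by move: Zs_q; rewrite eZs all_cat => /andP[].
rewrite eW2 in W2X; have [t le_t /andP[CX {}ZbX]] := IH C gs_q C_q W2X.
exists t.+1 => //; rewrite subSS ZbX andbT /= eZs cat_subseq //.
exact: subseq_cat_predC W1_q h_q Sp W1hS.
Qed.

End Weave.

Definition next_blocks (u v w : nat) (As : seq (seq nat)) : seq (seq nat) :=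
  flatten [seq [:: inflate a ++ [:: u]; [:: v; w]] | a <- As].

Definition prefix_end (u v w : nat) (e : bool) : seq nat :=
  if e then [:: u; v; w] else [:: u].

Lemma size_next_blocks u v w As : size (next_blocks u v w As) = 2 * size As.
Proof. by elim: As => //= a As IH; rewrite /next_blocks /= -/(next_blocks _ _ _ _) IH mulnS. Qed.

Lemma all_next_blocks (q : pred nat) u v w As : q u -> q v -> q w ->
  all (fun a => q (2 * a).-1 && q (2 * a)) (flatten As) ->
  all q (flatten (next_blocks u v w As)).
Proof.
move=> qu qv qw; elim: As => //= a As IH; rewrite all_cat => /andP[qa /IH].
by rewrite /next_blocks /= -/(next_blocks _ _ _ _) !all_cat all_inflate qa /= qu qv qw.
Qed.

Lemma next_blocks_prefix u v w gs a rest (e : bool) :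
  flatten (take (e + 2 * size gs).+1 (next_blocks u v w (rcons gs a ++ rest))) =
  weave [:: u; v; w] (map inflate gs) ++ inflate a ++ prefix_end u v w e.
Proof.
elim: gs => [|g gs IH]; rewrite /next_blocks.
  by rewrite muln0 addn0; case: e => /=; rewrite ?take0 ?cats0 -?catA.
rewrite mulnS addnCA add2n /= -/(next_blocks u v w _) IH weave_cons.
by rewrite -!catA.
Qed.

Lemma lcis_separators_le x y z m n (e d : bool) : x < y -> y < z ->
  lcis (flatten (nseq m [:: y; x; z]) ++ prefix_end y x z e)
       (flatten (nseq n [:: x; y; z]) ++ prefix_end x y z d) <= 2 * m + 2 * n + e + d.
Proof.
move=> xy yz; apply: lcis_le => V /and3P[VX VY V_lt].
have size_tail u v w k (b : bool) :
    size (flatten (nseq k [:: u; v; w]) ++ prefix_end u v w b) = 3 * k + 1 + 2 * b.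
  by rewrite size_cat size_flatten /shape map_nseq sumn_nseq; case: b => /=; lia.
have le3 : size V <= 3.
  apply: (uniq_leq_size (pairwise_uniq ltnn V_lt) (s2 := [:: x; y; z])) => v.
  move=> /(mem_subseq VY); rewrite mem_cat => /orP[/flattenP[s] | ].
    by rewrite mem_nseq => /andP[_ /eqP->].
  by apply: mem_subseq; case: (d); rewrite /prefix_end ?sub1seq ?mem_head.
have := size_subseq VX; have := size_subseq VY; rewrite !size_tail.
move: VX VY; case: m n e d => [|m] [|n] [] [] VX VY /=; try lia.
(* The length bounds alone fail only for m = n = 0 and e = d. *)
all: move=> _ _; rewrite /prefix_end in VX VY *.
- have [_ eq3] := size_subseq_leqif VX.
  case: (ltnP (size V) 3) => [|ge3]; first lia.
  have /eqP eV : V == [:: y; x; z] by rewrite -eq3 eqn_leq le3 ge3.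
  by move: V_lt; rewrite eV /=; lia.
- case: V VX VY {V_lt le3} => // v V.
  move=> /mem_subseq/(_ v (mem_head _ _)) + /mem_subseq/(_ v (mem_head _ _)).
  by rewrite !inE => /eqP-> /eqP; lia.
Qed.

Lemma lcis_prefix_end_ge x y z (e d : bool) : x < y -> y < z ->
  e + d <= lcis (prefix_end y x z e) (prefix_end x y z d).
Proof.
move=> xy yz; have xz := ltn_trans xy yz.
case: e; case: d; rewrite /prefix_end /=.
- apply: (lcis_max (V := [:: x; z])).
  by rewrite /cis subseq_cons /= xz !eqxx /= (gtn_eqF yz) eqxx.
- by apply: (lcis_max (V := [:: x])); rewrite /cis !sub1seq !inE !eqxx orbT.
- by apply: (lcis_max (V := [:: y])); rewrite /cis !sub1seq !inE !eqxx orbT.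
- by [].
Qed.

Lemma all_flatten_take (q : pred nat) n (Ls : seq (seq nat)) :
  all q (flatten Ls) -> all q (flatten (take n Ls)).
Proof. by rewrite -{1}(cat_take_drop n Ls) flatten_cat all_cat => /andP[]. Qed.

Lemma split_at_block (Ls : seq (seq nat)) i : i < 2 * size Ls ->
  exists gs a rest (e : bool), Ls = rcons gs a ++ rest /\ i = e + 2 * size gs.
Proof.
move=> lt_i; have lt_half : i./2 < size Ls by rewrite ltn_half_double -mul2n.
exists (take i./2 Ls), (nth [::] Ls i./2), (drop i./2.+1 Ls), (odd i).
by rewrite -take_nth // cat_take_drop size_takel 1?ltnW // mul2n odd_double_half.
Qed.

Lemma subseq_level_split x u v w (e : bool) Ls gs a rest Zs Zb :
  Ls = rcons gs a ++ rest -> all (fun c => 2 * c < x) (flatten Ls) ->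
  x <= u -> x <= v -> x <= w -> all (predC (leq x)) Zs -> all (leq x) Zb ->
  subseq (Zs ++ Zb)
    (weave [:: u; v; w] (map inflate gs) ++ inflate a ++ prefix_end u v w e) ->
  exists2 t, t <= size gs &
    subseq Zs (inflate (flatten (take t.+1 Ls))) &&
    subseq Zb (flatten (nseq (size gs - t) [:: u; v; w]) ++ prefix_end u v w e).
Proof.
move=> eLs Ls_lt xu xv xw Zs_lt Zb_ge ZX.
have blocks_lt : all (predC (leq x)) (flatten (rcons (map inflate gs) (inflate a))).
  rewrite -map_rcons -inflate_flatten all_inflate.
  move: Ls_lt; rewrite eLs flatten_cat all_cat => /andP[+ _].
  by apply: sub_all => c /=; lia.
have sep_ge : all (leq x) [:: u; v; w] by rewrite /= xu xv xw.
have end_ge : all (leq x) (prefix_end u v w e) by case: (e); rewrite /= xu ?xv ?xw.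
have [t le_t /andP[ZsX ZbX]] := subseq_weave_split blocks_lt sep_ge end_ge Zs_lt Zb_ge ZX.
rewrite size_map in le_t ZbX; exists t => //; rewrite ZbX andbT.
by rewrite eLs takel_cat ?size_rcons // inflate_flatten map_take map_rcons.
Qed.

Section NextLevel.

Variables (x y z : nat) (As Bs : seq (seq nat)).
Hypotheses (xy : x < y) (yz : y < z) (size_Bs : size Bs = size As).
Hypotheses (As_gt0 : all (fun a => 0 < a) (flatten As))
           (Bs_gt0 : all (fun a => 0 < a) (flatten Bs)).
Hypotheses (As_lt : all (fun a => 2 * a < x) (flatten As))
           (Bs_lt : all (fun a => 2 * a < x) (flatten Bs)).
Hypothesis lcis_prefix : forall i j, i < size As -> j < size As ->
  lcis (flatten (take i.+1 As)) (flatten (take j.+1 Bs)) = i + j + size As.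

Lemma lcis_next_le gs a ra hs b rb (e d : bool) :
  As = rcons gs a ++ ra -> Bs = rcons hs b ++ rb ->
  lcis (weave [:: y; x; z] (map inflate gs) ++ inflate a ++ prefix_end y x z e)
       (weave [:: x; y; z] (map inflate hs) ++ inflate b ++ prefix_end x y z d)
  <= e + 2 * size gs + (d + 2 * size hs) + 2 * size As.
Proof.
move=> eAs eBs; apply: lcis_le => V /and3P[VX VY V_lt].
have eV := pairwise_ltn_split x V_lt; rewrite eV in VX VY; rewrite eV size_cat.
have xz := ltn_trans xy yz.
have [t le_t /andP[VsX VbX]] := subseq_level_split eAs As_lt (ltnW xy) (leqnn x)
  (ltnW xz) (filter_all _ _) (filter_all _ _) VX.
have [u le_u /andP[VsY VbY]] := subseq_level_split eBs Bs_lt (leqnn x) (ltnW xy)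
  (ltnW xz) (filter_all _ _) (filter_all _ _) VY.
have lt_t : t < size As by rewrite eAs size_cat size_rcons ltn_addr.
have lt_u : u < size As by rewrite -size_Bs eBs size_cat size_rcons ltn_addr.
have Vs_le : size (filter (predC (leq x)) V) <= 2 * (t + u + size As).
  rewrite -lcis_prefix // -lcis_inflate ?all_flatten_take //; apply: lcis_max.
  by rewrite /cis VsX VsY pairwise_filter.
have Vb_le : size (filter (leq x) V) <= 2 * (size gs - t) + 2 * (size hs - u) + e + d.
  apply: leq_trans (lcis_separators_le _ _ _ _ xy yz); apply: lcis_max.
  by rewrite /cis VbX VbY pairwise_filter.
clear -Vs_le Vb_le le_t le_u; lia.
Qed.

Lemma lcis_next_ge gs a ra hs b rb (e d : bool) :
  As = rcons gs a ++ ra -> Bs = rcons hs b ++ rb ->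
  e + 2 * size gs + (d + 2 * size hs) + 2 * size As <=
  lcis (weave [:: y; x; z] (map inflate gs) ++ inflate a ++ prefix_end y x z e)
       (weave [:: x; y; z] (map inflate hs) ++ inflate b ++ prefix_end x y z d).
Proof.
move=> eAs eBs.
have take_prefix (Ls cs : seq (seq nat)) c r : Ls = rcons cs c ++ r ->
    flatten (rcons cs c) = flatten (take (size cs).+1 Ls).
  by move=> ->; rewrite takel_cat ?size_rcons // take_oversize ?size_rcons.
have sub_level u v w cs c (f : bool) :
    subseq (inflate (flatten (rcons cs c)) ++ prefix_end u v w f)
      (weave [:: u; v; w] (map inflate cs) ++ inflate c ++ prefix_end u v w f).
  by rewrite inflate_flatten map_rcons flatten_rcons -catA cat_subseq ?subseq_weave.
apply: leq_trans (lcis_subseq (sub_level _ _ _ _ _ _) (sub_level _ _ _ _ _ _)).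
rewrite (take_prefix _ _ _ _ eAs) (take_prefix _ _ _ _ eBs).
have lt_gs : size gs < size As by rewrite eAs size_cat size_rcons ltn_addr.
have lt_hs : size hs < size As by rewrite -size_Bs eBs size_cat size_rcons ltn_addr.
have sep : allrel ltn (inflate (flatten (take (size gs).+1 As))) (prefix_end y x z e).
  have P_lt : all (fun v => v < x) (inflate (flatten (take (size gs).+1 As))).
    by rewrite all_inflate; apply: sub_all (all_flatten_take _ As_lt) => c /=; lia.
  have end_ge : all (leq x) (prefix_end y x z e).
    by case: (e); rewrite /= ?(ltnW xy) ?(ltnW (ltn_trans xy yz)) ?leqnn.
  by apply/allrelP => v w /(allP P_lt) vx /(allP end_ge) xw; apply: leq_trans vx xw.
apply: leq_trans (lcis_cat _ _ sep).
rewrite lcis_inflate ?all_flatten_take // lcis_prefix //.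
have := lcis_prefix_end_ge e d xy yz; clear -e d; lia.
Qed.

Lemma lcis_next_blocks i j : i < 2 * size As -> j < 2 * size As ->
  lcis (flatten (take i.+1 (next_blocks y x z As)))
       (flatten (take j.+1 (next_blocks x y z Bs))) = i + j + 2 * size As.
Proof.
move=> lt_i; rewrite -{1}size_Bs => lt_j.
have [gs [a [ra [e [eAs ->]]]]] := split_at_block lt_i.
have [hs [b [rb [d [eBs ->]]]]] := split_at_block lt_j.
rewrite {1}eAs {1}eBs !next_blocks_prefix.
by apply/eqP; rewrite eqn_leq (lcis_next_le _ _ eAs eBs) (lcis_next_ge _ _ eAs eBs).
Qed.

End NextLevel.

Definition seps_max k := foldr maxn 0 (flatten (seps k).1 ++ flatten (seps k).2).

Lemma seps_succ k : seps k.+1 =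
  (next_blocks (2 * seps_max k + 2) (2 * seps_max k + 1) (2 * seps_max k + 3) (seps k).1,
   next_blocks (2 * seps_max k + 1) (2 * seps_max k + 2) (2 * seps_max k + 3) (seps k).2).
Proof. by rewrite /seps_max /=; case: (seps k). Qed.

Lemma size_seps k : size (seps k).1 = 2 ^ k /\ size (seps k).2 = 2 ^ k.
Proof.
elim: k => [|k [size1 size2]] //.
by rewrite seps_succ !size_next_blocks size1 size2 expnS.
Qed.

Lemma seps_gt0 k :
  all (fun a => 0 < a) (flatten (seps k).1) && all (fun a => 0 < a) (flatten (seps k).2).
Proof.
elim: k => // k /andP[A_gt0 B_gt0]; rewrite seps_succ.
have inflate_gt0 As : all (fun a => 0 < a) (flatten As) ->
    all (fun a => (0 < (2 * a).-1) && (0 < 2 * a)) (flatten As).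
  by apply: sub_all => a /=; lia.
by rewrite !all_next_blocks ?inflate_gt0 ?addn1 ?addn2 ?addn3.
Qed.

Lemma leq_seps_max k :
  all (fun a => a <= seps_max k) (flatten (seps k).1 ++ flatten (seps k).2).
Proof.
apply/allP => a a_in; rewrite /seps_max foldrE.
exact: (leq_bigmax_seq (F := id)).
Qed.

Lemma lcis_seps k i j : i < 2 ^ k -> j < 2 ^ k ->
  lcis (flatten (take i.+1 (seps k).1)) (flatten (take j.+1 (seps k).2)) = i + j + 2 ^ k.
Proof.
elim: k i j => [|k IH] i j.
  by rewrite expn0 !ltnS !leqn0 => /eqP-> /eqP->; rewrite /lcis unlock.
have [size1 size2] := size_seps k; have /andP[A_gt0 B_gt0] := seps_gt0 k.
have := leq_seps_max k; rewrite all_cat => /andP[A_le B_le].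
have below_seps q : all (fun a => a <= seps_max k) q ->
    all (fun a => 2 * a < 2 * seps_max k + 1) q.
  by apply: sub_all => a /=; rewrite addn1 ltnS leq_mul2l.
rewrite seps_succ expnS -size1.
by apply: lcis_next_blocks; rewrite ?size1 ?size2 ?ltn_add2l ?below_seps.
Qed.

Theorem lemma11 (k i j : nat) :
  i < 2 ^ k -> j < 2 ^ k ->
  lcis (alpha_prefix k i) (beta_prefix k j) = i + j + 2 ^ k.
Proof.
have [size1 size2] := size_seps k; move=> lt_i lt_j.
rewrite /alpha_prefix /beta_prefix /alpha /beta !map_nth_iota0 ?size1 ?size2 //.
exact: lcis_seps.
Qed.
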